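(* Let $\mathcal{V}$ and $\mathcal{W}$ be quaternionic two-sided Banach algebras with unit $1\neq 0$, let $\mathcal{A}:\mathcal{V}\to\mathcal{W}$ be a bounded below homomorphism, and let $a\in\mathcal{V}$. Then $\partial\sigma_{S}(a)\subset\partial\sigma_{S,\mathcal{A}}^{\Phi}(a)$, where $\partial$ denotes the boundary in $\mathbb{H}$.
   Context: $\mathbb{H}$ denotes the quaternions, $Re(q)$ the real part and $|q|$ the norm of $q$. A quaternionic two-sided Banach algebra with unit is a two-sided $\mathbb{H}$-vector space $\mathcal{V}$ with an associative product satisfying $x(y+z)=xy+xz$, $(x+y)z=xz+yz$, $q(xy)=(qx)y$, $(xy)q=x(yq)$, complete for a norm with $\|qx\|=|q|\|x\|=\|xq\|$, $\|xy\|\le\|x\|\|y\|$, with unit $1_{\mathcal{V}}$, $\|1_{\mathcal{V}}\|=1$. A homomorphism $\mathcal{A}$ is additive, multiplicative, $\mathbb{H}$-linear on both sides and unital; it is bounded below if there is $c>0$ with $\|\mathcal{A}(v)\|\ge c\|v\|$ for all $v$. $\mathcal{V}^{-1}$ denotes invertible elements. $R_q(v)=v^2-2Re(q)v+|q|^21_{\mathcal{V}}$. The S-spectrum is $\sigma_S(v)=\{q\in\mathbb{H}:R_q(v)\notin\mathcal{V}^{-1}\}$. $\Phi_{\mathcal{A}}=\{v:\mathcal{A}(v)\in\mathcal{W}^{-1}\}$ and $\sigma_{S,\mathcal{A}}^{\Phi}(v)=\{q\in\mathbb{H}:R_q(v)\notin\Phi_{\mathcal{A}}\}$. *)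

From Stdlib Require Import Reals.
Open Scope R_scope.

Record quat := Quat { qre : R; qi : R; qj : R; qk : R }.

Definition qadd (p q : quat) : quat :=
  Quat (qre p + qre q) (qi p + qi q) (qj p + qj q) (qk p + qk q).
Definition qopp (p : quat) : quat := Quat (- qre p) (- qi p) (- qj p) (- qk p).
Definition qsub (p q : quat) : quat := qadd p (qopp q).
Definition qmul (p q : quat) : quat :=
  Quat (qre p * qre q - qi p * qi q - qj p * qj q - qk p * qk q)
       (qre p * qi q + qi p * qre q + qj p * qk q - qk p * qj q)
       (qre p * qj q - qi p * qk q + qj p * qre q + qk p * qi q)
       (qre p * qk q + qi p * qj q - qj p * qi q + qk p * qre q).
Definition qzero : quat := Quat 0 0 0 0.
Definition qone : quat := Quat 1 0 0 0.
Definition qreal (r : R) : quat := Quat r 0 0 0.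
Definition Re (q : quat) : R := qre q.
Definition qnorm (q : quat) : R :=
  sqrt (qre q * qre q + qi q * qi q + qj q * qj q + qk q * qk q).

Definition interiorH (S : quat -> Prop) (q : quat) : Prop :=
  exists e, 0 < e /\ forall p, qnorm (qsub p q) < e -> S p.
Definition closureH (S : quat -> Prop) (q : quat) : Prop :=
  forall e, 0 < e -> exists p, S p /\ qnorm (qsub p q) < e.
Definition boundaryH (S : quat -> Prop) (q : quat) : Prop :=
  closureH S q /\ ~ interiorH S q.

Record QBanachAlg := {
  car :> Type;
  vadd : car -> car -> car;
  vzero : car;
  vopp : car -> car;
  vmul : car -> car -> car;
  vone : car;
  lsc : quat -> car -> car;
  rsc : car -> quat -> car;
  vnorm : car -> R;
  vaddA : forall x y z, vadd x (vadd y z) = vadd (vadd x y) z;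
  vaddC : forall x y, vadd x y = vadd y x;
  vadd0 : forall x, vadd x vzero = x;
  vaddN : forall x, vadd x (vopp x) = vzero;
  lscDr : forall q x y, lsc q (vadd x y) = vadd (lsc q x) (lsc q y);
  lscDl : forall p q x, lsc (qadd p q) x = vadd (lsc p x) (lsc q x);
  lscA : forall p q x, lsc (qmul p q) x = lsc p (lsc q x);
  lsc1 : forall x, lsc qone x = x;
  rscDl : forall q x y, rsc (vadd x y) q = vadd (rsc x q) (rsc y q);
  rscDr : forall p q x, rsc x (qadd p q) = vadd (rsc x p) (rsc x q);
  rscA : forall p q x, rsc x (qmul p q) = rsc (rsc x p) q;
  rsc1 : forall x, rsc x qone = x;
  lrscA : forall p q x, rsc (lsc p x) q = lsc p (rsc x q);
  lrsc_real : forall (r : R) x, lsc (qreal r) x = rsc x (qreal r);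
  vmulA : forall x y z, vmul x (vmul y z) = vmul (vmul x y) z;
  vmulDr : forall x y z, vmul x (vadd y z) = vadd (vmul x y) (vmul x z);
  vmulDl : forall x y z, vmul (vadd x y) z = vadd (vmul x z) (vmul y z);
  lsc_mul : forall q x y, lsc q (vmul x y) = vmul (lsc q x) y;
  rsc_mul : forall q x y, rsc (vmul x y) q = vmul x (rsc y q);
  vmul1l : forall x, vmul vone x = x;
  vmul1r : forall x, vmul x vone = x;
  vnorm_ge0 : forall x, 0 <= vnorm x;
  vnorm_eq0 : forall x, vnorm x = 0 -> x = vzero;
  vnorm0 : vnorm vzero = 0;
  vnorm_triangle : forall x y, vnorm (vadd x y) <= vnorm x + vnorm y;
  vnorm_lsc : forall q x, vnorm (lsc q x) = qnorm q * vnorm x;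
  vnorm_rsc : forall q x, vnorm (rsc x q) = qnorm q * vnorm x;
  vnorm_mul : forall x y, vnorm (vmul x y) <= vnorm x * vnorm y;
  vnorm1 : vnorm vone = 1;
  vcomplete : forall u : nat -> car,
    (forall e, 0 < e -> exists N, forall m n, (N <= m)%nat -> (N <= n)%nat ->
        vnorm (vadd (u m) (vopp (u n))) < e) ->
    exists l, forall e, 0 < e -> exists N, forall n, (N <= n)%nat ->
        vnorm (vadd (u n) (vopp l)) < e
}.

Arguments vadd {_}. Arguments vzero {_}. Arguments vopp {_}.
Arguments vmul {_}. Arguments vone {_}. Arguments lsc {_}.
Arguments rsc {_}. Arguments vnorm {_}.

Definition invertible {V : QBanachAlg} (x : V) : Prop :=
  exists y : V, vmul x y = vone /\ vmul y x = vone.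

Definition Rq {V : QBanachAlg} (q : quat) (v : V) : V :=
  vadd (vadd (vmul v v) (vopp (lsc (qreal (2 * Re q)) v)))
       (lsc (qreal (qnorm q ^ 2)) vone).

Definition S_spectrum {V : QBanachAlg} (v : V) (q : quat) : Prop :=
  ~ invertible (Rq q v).

Definition is_homomorphism {V W : QBanachAlg} (A : V -> W) : Prop :=
  (forall x y, A (vadd x y) = vadd (A x) (A y)) /\
  (forall x y, A (vmul x y) = vmul (A x) (A y)) /\
  (forall q x, A (lsc q x) = lsc q (A x)) /\
  (forall q x, A (rsc x q) = rsc (A x) q) /\
  A vone = vone.

Definition bounded_below {V W : QBanachAlg} (A : V -> W) : Prop :=
  exists c, 0 < c /\ forall v, vnorm (A v) >= c * vnorm v.

Definition PhiA {V W : QBanachAlg} (A : V -> W) (v : V) : Prop :=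
  invertible (A v).

Definition S_spectrum_Phi {V W : QBanachAlg} (A : V -> W) (v : V) (q : quat) : Prop :=
  ~ PhiA A (Rq q v).

From Stdlib Require Import Reals Lra Lia Psatz Classical.
Open Scope R_scope.

(* Suppose q is a boundary point of σ_S(a) but A(R_q(a)) has an inverse w.  Since
   p ↦ R_p(a) is continuous, a Neumann-series argument in W bounds every right
   inverse of A(R_p(a)), p near q, by 2‖w‖; as A is bounded below (constant c), every
   right inverse of R_p(a) is bounded by 2‖w‖/c.  Near q there are p with R_p(a)
   invertible and p' with R_p'(a) singular, yet R_p'(a) is a perturbation of R_p(a)
   smaller than the reciprocal of that uniform bound, hence invertible: contradiction.
   So q ∈ σ^Φ_{S,A}(a); and q is not interior to σ^Φ_{S,A}(a) ⊆ σ_S(a), because A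
   maps inverses to inverses. *)

Definition qdot (p q : quat) : R :=
  qre p * qre q + qi p * qi q + qj p * qj q + qk p * qk q.

Lemma qnorm_ge0 (q : quat) : 0 <= qnorm q.
Proof. apply sqrt_pos. Qed.

Lemma qnorm_sq (q : quat) : qnorm q ^ 2 = qdot q q.
Proof. unfold qnorm, qdot. apply pow2_sqrt. nra. Qed.

Lemma qnorm_sub_diag (q : quat) : qnorm (qsub q q) = 0.
Proof.
  unfold qnorm, qsub, qadd, qopp; simpl.
  rewrite <- sqrt_0. f_equal. ring.
Qed.

Lemma qnorm_real (r : R) : qnorm (qreal r) = Rabs r.
Proof.
  unfold qnorm, qreal; simpl. rewrite <- sqrt_Rsqr_abs. f_equal. unfold Rsqr. ring.
Qed.

Lemma Rabs_le_of_sq_le (x y : R) : 0 <= y -> x ^ 2 <= y ^ 2 -> Rabs x <= y.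
Proof.
  intros Hy Hxy. rewrite <- (Rabs_right y) by lra.
  apply Rsqr_le_abs_0. unfold Rsqr. nra.
Qed.

Lemma Rabs_Re_le (q : quat) : Rabs (Re q) <= qnorm q.
Proof.
  apply Rabs_le_of_sq_le; [apply qnorm_ge0|].
  rewrite qnorm_sq. unfold Re, qdot. nra.
Qed.

Lemma Rabs_qdot_le (p q : quat) : Rabs (qdot p q) <= qnorm p * qnorm q.
Proof.
  apply Rabs_le_of_sq_le; [apply Rmult_le_pos; apply qnorm_ge0|].
  rewrite Rpow_mult_distr, !qnorm_sq. unfold qdot.
  destruct p as [p0 p1 p2 p3], q as [q0 q1 q2 q3]; simpl.
  assert (Hlagrange :
    (p0 * p0 + p1 * p1 + p2 * p2 + p3 * p3) * (q0 * q0 + q1 * q1 + q2 * q2 + q3 * q3)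
    - (p0 * q0 + p1 * q1 + p2 * q2 + p3 * q3) ^ 2
    = (p0 * q1 - p1 * q0) ^ 2 + (p0 * q2 - p2 * q0) ^ 2 + (p0 * q3 - p3 * q0) ^ 2
      + (p1 * q2 - p2 * q1) ^ 2 + (p1 * q3 - p3 * q1) ^ 2 + (p2 * q3 - p3 * q2) ^ 2)
    by ring.
  pose proof (pow2_ge_0 (p0 * q1 - p1 * q0)). pose proof (pow2_ge_0 (p0 * q2 - p2 * q0)).
  pose proof (pow2_ge_0 (p0 * q3 - p3 * q0)). pose proof (pow2_ge_0 (p1 * q2 - p2 * q1)).
  pose proof (pow2_ge_0 (p1 * q3 - p3 * q1)). pose proof (pow2_ge_0 (p2 * q3 - p3 * q2)).
  lra.
Qed.

Lemma qnorm_sq_sub (p q : quat) :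
  qnorm p ^ 2 - qnorm q ^ 2 = qnorm (qsub p q) ^ 2 + 2 * qdot q (qsub p q).
Proof. rewrite !qnorm_sq. unfold qdot, qsub, qadd, qopp; simpl. ring. Qed.

Lemma Rabs_qnorm_sq_sub_le (p q : quat) :
  Rabs (qnorm p ^ 2 - qnorm q ^ 2) <= qnorm (qsub p q) * (qnorm (qsub p q) + 2 * qnorm q).
Proof.
  rewrite qnorm_sq_sub.
  pose proof (Rabs_qdot_le q (qsub p q)). pose proof (qnorm_ge0 (qsub p q)).
  eapply Rle_trans; [apply Rabs_triang|].
  rewrite Rabs_mult, Rabs_right, (Rabs_right 2) by nra. nra.
Qed.

Lemma closureH_of_mem (S : quat -> Prop) (q : quat) : S q -> closureH S q.
Proof. intros Sq e He. exists q. rewrite qnorm_sub_diag. auto. Qed.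

Lemma interiorH_mono (S T : quat -> Prop) (q : quat) :
  (forall p, S p -> T p) -> interiorH S q -> interiorH T q.
Proof. intros ST [e [He HS]]. exists e. auto. Qed.

Arguments vaddA {_}. Arguments vaddC {_}. Arguments vadd0 {_}. Arguments vaddN {_}.
Arguments lscDl {_}. Arguments vmulA {_}. Arguments vmulDr {_}. Arguments vmulDl {_}.
Arguments vmul1l {_}. Arguments vmul1r {_}. Arguments vnorm_ge0 {_}. Arguments vnorm_eq0 {_}.
Arguments vnorm0 {_}. Arguments vnorm_triangle {_}. Arguments vnorm_lsc {_}.
Arguments vnorm_mul {_}. Arguments vnorm1 {_}.

Notation vsub x y := (vadd x (vopp y)).

Section Algebra.
Context {V : QBanachAlg}.
Implicit Types x y z : V.

Lemma vadd0l x : vadd vzero x = x.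
Proof. rewrite vaddC. apply vadd0. Qed.

Lemma vaddNl x : vadd (vopp x) x = vzero.
Proof. rewrite vaddC. apply vaddN. Qed.

Lemma vaddKl x y : vadd (vopp x) (vadd x y) = y.
Proof. rewrite vaddA, vaddNl. apply vadd0l. Qed.

Lemma vadd_idem_eq0 x : vadd x x = x -> x = vzero.
Proof. intro H. rewrite <- (vaddKl x x), H. apply vaddNl. Qed.

Lemma vopp_unique x y : vadd x y = vzero -> y = vopp x.
Proof. intro H. rewrite <- (vaddKl x y), H. apply vadd0. Qed.

Lemma vopp_opp x : vopp (vopp x) = x.
Proof. symmetry. apply vopp_unique, vaddNl. Qed.

Lemma vaddACA (a b c d : V) : vadd (vadd a b) (vadd c d) = vadd (vadd a c) (vadd b d).
Proof. rewrite <- !vaddA. f_equal. rewrite !vaddA. f_equal. apply vaddC. Qed.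

Lemma vopp_add x y : vopp (vadd x y) = vadd (vopp x) (vopp y).
Proof. symmetry. apply vopp_unique. rewrite vaddACA, !vaddN. apply vadd0. Qed.

Lemma vsub_eq0 x y : vsub x y = vzero -> x = y.
Proof. intro H. rewrite <- (vopp_opp y). apply vopp_unique. rewrite vaddC. exact H. Qed.

Lemma vsub_trans x y z : vsub x z = vadd (vsub x y) (vsub y z).
Proof. rewrite <- vaddA, (vaddA (vopp y)), vaddNl, vadd0l. reflexivity. Qed.

Lemma vmul0r x : vmul x vzero = vzero.
Proof. apply vadd_idem_eq0. rewrite <- vmulDr, vadd0. reflexivity. Qed.

Lemma vmul0l x : vmul vzero x = vzero.
Proof. apply vadd_idem_eq0. rewrite <- vmulDl, vadd0. reflexivity. Qed.

Lemma vmulNr x y : vmul x (vopp y) = vopp (vmul x y).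
Proof. apply vopp_unique. rewrite <- vmulDr, vaddN. apply vmul0r. Qed.

Lemma vmulNl x y : vmul (vopp x) y = vopp (vmul x y).
Proof. apply vopp_unique. rewrite <- vmulDl, vaddN. apply vmul0l. Qed.

Lemma lsc_realD (r s : R) x : vadd (lsc (qreal r) x) (lsc (qreal s) x) = lsc (qreal (r + s)) x.
Proof.
  rewrite <- lscDl. f_equal. unfold qadd, qreal; simpl. f_equal; ring.
Qed.

Lemma vopp_lsc_real (r : R) x : vopp (lsc (qreal r) x) = lsc (qreal (- r)) x.
Proof.
  symmetry. apply vopp_unique. rewrite lsc_realD, Rplus_opp_r.
  apply vadd_idem_eq0. rewrite lsc_realD, Rplus_0_r. reflexivity.
Qed.

Lemma vnorm_lsc_real (r : R) x : vnorm (lsc (qreal r) x) = Rabs r * vnorm x.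
Proof. rewrite vnorm_lsc, qnorm_real. reflexivity. Qed.

Lemma vnorm_opp x : vnorm (vopp x) = vnorm x.
Proof.
  rewrite <- (lsc1 _ x). change qone with (qreal 1).
  rewrite vopp_lsc_real, !vnorm_lsc_real, Rabs_Ropp. reflexivity.
Qed.

Lemma vnorm_sub_sym x y : vnorm (vsub x y) = vnorm (vsub y x).
Proof. rewrite <- vnorm_opp, vopp_add, vopp_opp, vaddC. reflexivity. Qed.

Lemma vnorm_sub_le x y : vnorm (vsub x y) <= vnorm x + vnorm y.
Proof. rewrite <- (vnorm_opp y). apply vnorm_triangle. Qed.

Lemma eq_of_vnorm_sub_lt x y : (forall e, 0 < e -> vnorm (vsub x y) < e) -> x = y.
Proof.
  intro H. apply vsub_eq0, vnorm_eq0.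
  destruct (Rle_lt_or_eq_dec _ _ (vnorm_ge0 (vsub x y))) as [Hpos | Hzero]; auto.
  specialize (H _ Hpos). lra.
Qed.

End Algebra.

Section Neumann.
Context {V : QBanachAlg}.
Implicit Types x y z : V.

Definition vcvg (s : nat -> V) (l : V) : Prop :=
  forall e, 0 < e -> exists N, forall n, (N <= n)%nat -> vnorm (vsub (s n) l) < e.

Lemma vcvg_unique (s : nat -> V) l l' : vcvg s l -> vcvg s l' -> l = l'.
Proof.
  intros Hl Hl'. apply eq_of_vnorm_sub_lt. intros e He.
  destruct (Hl (e / 2)) as [N HN]; [lra|]. destruct (Hl' (e / 2)) as [N' HN']; [lra|].
  specialize (HN (N + N')%nat ltac:(lia)). specialize (HN' (N + N')%nat ltac:(lia)).
  rewrite vnorm_sub_sym in HN.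
  rewrite (vsub_trans l (s (N + N')%nat) l').
  eapply Rle_lt_trans; [apply vnorm_triangle|]. lra.
Qed.

Lemma vcvg_ext (s t : nat -> V) l : (forall n, s n = t n) -> vcvg s l -> vcvg t l.
Proof.
  intros Hst Hs e He. destruct (Hs e He) as [N HN]. exists N. intros n Hn.
  rewrite <- Hst. auto.
Qed.

Lemma vcvg_lipschitz (s t : nat -> V) l m (K : R) : 0 <= K ->
  (forall n, vnorm (vsub (t n) m) <= K * vnorm (vsub (s n) l)) -> vcvg s l -> vcvg t m.
Proof.
  intros HK Hts Hs e He. destruct (Hs (e / (K + 1))) as [N HN].
  { apply Rdiv_lt_0_compat; lra. }
  exists N. intros n Hn. specialize (HN n Hn). specialize (Hts n).
  assert (HKe : K * (e / (K + 1)) < e).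
  { apply (Rmult_lt_reg_r (K + 1)); [lra|]. field_simplify; lra. }
  pose proof (vnorm_ge0 (vsub (s n) l)). nra.
Qed.

Lemma vcvg_mull z (s : nat -> V) l : vcvg s l -> vcvg (fun n => vmul z (s n)) (vmul z l).
Proof.
  apply (vcvg_lipschitz _ _ _ _ (vnorm z)); [apply vnorm_ge0|]. intro n.
  rewrite <- vmulNr, <- vmulDr. apply vnorm_mul.
Qed.

Lemma vcvg_mulr z (s : nat -> V) l : vcvg s l -> vcvg (fun n => vmul (s n) z) (vmul l z).
Proof.
  apply (vcvg_lipschitz _ _ _ _ (vnorm z)); [apply vnorm_ge0|]. intro n.
  rewrite <- vmulNl, <- vmulDl, Rmult_comm. apply vnorm_mul.
Qed.

Fixpoint vpow x n : V :=
  match n with O => vone | S m => vmul x (vpow x m) end.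

Fixpoint geom_sum x n : V :=
  match n with O => vzero | S m => vadd (geom_sum x m) (vpow x m) end.

Lemma vnorm_vpow_le x n : vnorm (vpow x n) <= vnorm x ^ n.
Proof.
  induction n as [|n IH]; simpl.
  - rewrite vnorm1. lra.
  - eapply Rle_trans; [apply vnorm_mul|]. apply Rmult_le_compat_l; auto. apply vnorm_ge0.
Qed.

Lemma vpow_Sr x n : vpow x (S n) = vmul (vpow x n) x.
Proof.
  induction n as [|n IH]; simpl.
  - rewrite vmul1r, vmul1l. reflexivity.
  - simpl in IH. rewrite IH at 1. apply vmulA.
Qed.

Lemma geom_sum_mul x n :
  vmul (vsub vone x) (geom_sum x n) = vsub vone (vpow x n) /\
  vmul (geom_sum x n) (vsub vone x) = vsub vone (vpow x n).
Proof.
  induction n as [|n [IHl IHr]]; simpl geom_sum.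
  - rewrite vmul0r, vmul0l, vaddN. auto.
  - split.
    + rewrite vmulDr, IHl, vmulDl, vmul1l, vmulNl, <- vaddA, vaddKl. reflexivity.
    + rewrite vmulDl, IHr, vmulDr, vmul1r, vmulNr, <- vaddA, vaddKl, vpow_Sr. reflexivity.
Qed.

Section Contraction.
Variable x : V.
Hypothesis x_lt1 : vnorm x < 1.

Lemma vpow_lt_eventually e : 0 < e -> exists N, forall n, (N <= n)%nat -> vnorm x ^ n < e.
Proof.
  intro He.
  assert (Hr : Rabs (vnorm x) < 1)
    by (rewrite Rabs_right; [|apply Rle_ge, vnorm_ge0]; lra).
  destruct (pow_lt_1_zero (vnorm x) Hr e He) as [N HN]. exists N. intros n Hn.
  specialize (HN n Hn). rewrite Rabs_right in HN; auto.
  apply Rle_ge, pow_le, vnorm_ge0.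
Qed.

Lemma vnorm_geom_sum_sub_le n k :
  vnorm (vsub (geom_sum x (n + k)) (geom_sum x n))
  <= vnorm x ^ n * (1 - vnorm x ^ k) / (1 - vnorm x).
Proof.
  assert (H0 : 0 <= vnorm x) by apply vnorm_ge0.
  induction k as [|k IH].
  - rewrite Nat.add_0_r, vaddN, vnorm0. right. simpl. field. lra.
  - rewrite Nat.add_succ_r. simpl geom_sum.
    rewrite <- vaddA, (vaddC (vpow x (n + k))), vaddA.
    eapply Rle_trans; [apply vnorm_triangle|].
    eapply Rle_trans; [apply Rplus_le_compat; [exact IH | apply vnorm_vpow_le]|].
    rewrite pow_add. right. simpl. field. lra.
Qed.

Lemma geom_sum_cauchy e : 0 < e -> exists N, forall m n, (N <= m)%nat -> (N <= n)%nat ->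
  vnorm (vsub (geom_sum x m) (geom_sum x n)) < e.
Proof.
  intro He. assert (H0 : 0 <= vnorm x) by apply vnorm_ge0.
  destruct (vpow_lt_eventually (e * (1 - vnorm x))) as [N HN]; [nra|].
  assert (Htail : forall n k, (N <= n)%nat ->
            vnorm (vsub (geom_sum x (n + k)) (geom_sum x n)) < e).
  { intros n k Hn. eapply Rle_lt_trans; [apply vnorm_geom_sum_sub_le|].
    specialize (HN n Hn).
    pose proof (pow_le (vnorm x) k H0). pose proof (pow_le (vnorm x) n H0).
    apply (Rmult_lt_reg_r (1 - vnorm x)); [lra|]. field_simplify; nra. }
  exists N. intros m n Hm Hn. destruct (Nat.le_ge_cases n m) as [Hnm | Hmn].
  - replace m with (n + (m - n))%nat by lia. auto.
  - rewrite vnorm_sub_sym. replace n with (m + (n - m))%nat by lia. auto.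
Qed.

Lemma vcvg_one_sub_vpow : vcvg (fun n => vsub vone (vpow x n)) vone.
Proof.
  intros e He. destruct (vpow_lt_eventually e He) as [N HN]. exists N. intros n Hn.
  rewrite vaddC, vaddKl, vnorm_opp.
  eapply Rle_lt_trans; [apply vnorm_vpow_le | auto].
Qed.

Lemma invertible_one_sub : invertible (vsub vone x).
Proof.
  destruct (vcomplete V (geom_sum x) geom_sum_cauchy) as [l Hl].
  exists l. split; apply (vcvg_unique (fun n => vsub vone (vpow x n))).
  - apply (vcvg_ext (fun n => vmul (vsub vone x) (geom_sum x n))).
    + intro n. apply geom_sum_mul.
    + exact (vcvg_mull _ _ _ Hl).
  - apply vcvg_one_sub_vpow.
  - apply (vcvg_ext (fun n => vmul (geom_sum x n) (vsub vone x))).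
    + intro n. apply geom_sum_mul.
    + exact (vcvg_mulr _ _ _ Hl).
  - apply vcvg_one_sub_vpow.
Qed.

End Contraction.

End Neumann.

Section Perturbation.
Context {V : QBanachAlg}.

Lemma invertible_perturb (X y Y : V) : vmul X y = vone -> vmul y X = vone ->
  vnorm y * vnorm (vsub X Y) < 1 -> invertible Y.
Proof.
  intros HXy HyX Hsmall.
  set (u := vmul y (vsub X Y)).
  destruct (invertible_one_sub u) as [z [Huz Hzu]].
  { eapply Rle_lt_trans; [apply vnorm_mul | exact Hsmall]. }
  assert (HY : Y = vmul X (vsub vone u)).
  { unfold u. rewrite vmulDr, vmul1r, vmulNr, vmulA, HXy, vmul1l,
      vopp_add, vopp_opp, vaddA, vaddN, vadd0l. reflexivity. }
  exists (vmul z y). rewrite HY. split.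
  - rewrite <- vmulA, (vmulA _ z), Huz, vmul1l. exact HXy.
  - rewrite <- vmulA, (vmulA y), HyX, vmul1l. exact Hzu.
Qed.

Lemma vnorm_right_inverse_le (T w X z : V) : vmul w T = vone -> vmul X z = vone ->
  vnorm w * vnorm (vsub X T) <= / 2 -> vnorm z <= 2 * vnorm w.
Proof.
  intros HwT HXz Hsmall.
  set (D := vsub X T).
  (* z = w T z = w (X - D) z = w - w D z *)
  assert (Hz : z = vsub w (vmul w (vmul D z))).
  { rewrite <- (vmul1l z) at 1. rewrite <- HwT, <- vmulA.
    replace T with (vsub X D) at 1
      by (unfold D; rewrite vopp_add, vopp_opp, vaddA, vaddN, vadd0l; reflexivity).
    rewrite vmulDl, HXz, vmulNl, vmulDr, vmul1r, vmulNr. reflexivity. }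
  assert (Hle : vnorm z <= vnorm w + vnorm w * vnorm D * vnorm z).
  { rewrite Hz at 1. eapply Rle_trans; [apply vnorm_sub_le|].
    apply Rplus_le_compat_l. eapply Rle_trans; [apply vnorm_mul|].
    rewrite Rmult_assoc. apply Rmult_le_compat_l; [apply vnorm_ge0 | apply vnorm_mul]. }
  assert (vnorm w * vnorm D * vnorm z <= / 2 * vnorm z)
    by (apply Rmult_le_compat_r; [apply vnorm_ge0 | exact Hsmall]).
  lra.
Qed.

Lemma Rq_sub (b : V) (p q : quat) : vsub (Rq p b) (Rq q b) =
  vadd (lsc (qreal (2 * (Re q - Re p))) b) (lsc (qreal (qnorm p ^ 2 - qnorm q ^ 2)) vone).
Proof.
  unfold Rq. rewrite !vopp_add, !vopp_opp, vaddACA, (vaddACA (vmul b b)), vaddN, vadd0l,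
    !vopp_lsc_real, !lsc_realD.
  f_equal; f_equal; f_equal; ring.
Qed.

Lemma vnorm_Rq_sub_le (b : V) (p q : quat) : vnorm (vsub (Rq p b) (Rq q b)) <=
  qnorm (qsub p q) * (2 * vnorm b + qnorm (qsub p q) + 2 * qnorm q).
Proof.
  rewrite Rq_sub. eapply Rle_trans; [apply vnorm_triangle|].
  rewrite !vnorm_lsc_real, vnorm1, Rmult_1_r.
  assert (HRe : Rabs (2 * (Re q - Re p)) <= 2 * qnorm (qsub p q)).
  { rewrite Rabs_mult, Rabs_right, Rabs_minus_sym by lra.
    pose proof (Rabs_Re_le (qsub p q)) as HRe.
    change (Re (qsub p q)) with (Re p - Re q) in HRe.
    lra. }
  pose proof (Rabs_qnorm_sq_sub_le p q). pose proof (vnorm_ge0 b).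
  pose proof (Rabs_pos (2 * (Re q - Re p))). nra.
Qed.

Lemma Rq_continuous (b : V) (q : quat) e : 0 < e -> exists d, 0 < d /\
  forall p, qnorm (qsub p q) < d -> vnorm (vsub (Rq p b) (Rq q b)) < e.
Proof.
  intro He. set (K := 2 * vnorm b + 1 + 2 * qnorm q).
  assert (HK : 0 < K) by (unfold K; pose proof (vnorm_ge0 b); pose proof (qnorm_ge0 q); lra).
  exists (Rmin 1 (e / K)). split.
  { apply Rmin_pos; [lra | apply Rdiv_lt_0_compat; auto]. }
  intros p Hp. set (m := qnorm (qsub p q)) in Hp.
  pose proof (Rmin_l 1 (e / K)). pose proof (Rmin_r 1 (e / K)).
  assert (HmK : m * K < e).
  { apply (Rmult_lt_reg_r (/ K)); [apply Rinv_0_lt_compat; auto|].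
    rewrite Rmult_assoc, Rinv_r by lra. unfold Rdiv in *. lra. }
  eapply Rle_lt_trans; [apply vnorm_Rq_sub_le|]. fold m.
  assert (0 <= m) by apply qnorm_ge0. unfold K in HmK. nra.
Qed.

End Perturbation.

Lemma not_closureH_S_spectrum_of_bounded_inverses {V : QBanachAlg} (a : V) (q : quat)
  (d M : R) : 0 < d -> 0 <= M ->
  (forall p y, qnorm (qsub p q) < d -> vmul (Rq p a) y = vone -> vnorm y <= M) ->
  ~ interiorH (S_spectrum a) q -> ~ closureH (S_spectrum a) q.
Proof.
  intros Hd HM Hbound Hnint Hcl.
  destruct (Rq_continuous a q (/ (2 * (M + 1)))) as [d' [Hd' Hcont]].
  { apply Rinv_0_lt_compat. lra. }
  pose proof (Rmin_l d d'). pose proof (Rmin_r d d').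
  assert (Hd0 : 0 < Rmin d d') by (apply Rmin_pos; auto).
  set (d0 := Rmin d d') in *.
  destruct (classic (exists p, qnorm (qsub p q) < d0 /\ invertible (Rq p a)))
    as [[p [Hp [y [Hy1 Hy2]]]] | Hno].
  2:{ apply Hnint. exists d0. split; auto. intros p Hp Hinv. apply Hno. eauto. }
  destruct (Hcl d0 Hd0) as [p' [Hp' Hp'q]].
  apply Hp'. apply (invertible_perturb (Rq p a) y); auto.
  assert (Hy : vnorm y <= M) by (apply (Hbound p); auto; lra).
  assert (Hclose : vnorm (vsub (Rq p a) (Rq p' a)) < / (M + 1)).
  { rewrite (vsub_trans _ (Rq q a)).
    eapply Rle_lt_trans; [apply vnorm_triangle|]. rewrite (vnorm_sub_sym (Rq q a)).
    assert (vnorm (vsub (Rq p a) (Rq q a)) < / (2 * (M + 1))) by (apply Hcont; lra).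
    assert (vnorm (vsub (Rq p' a) (Rq q a)) < / (2 * (M + 1))) by (apply Hcont; lra).
    replace (/ (M + 1)) with (/ (2 * (M + 1)) + / (2 * (M + 1))) by (field; lra).
    lra. }
  apply Rle_lt_trans with (M * / (M + 1)).
  - apply Rmult_le_compat; auto using vnorm_ge0, Rlt_le.
  - apply (Rmult_lt_reg_r (M + 1)); [lra|]. rewrite Rmult_assoc, Rinv_l by lra. lra.
Qed.

Section Homomorphism.
Context {V W : QBanachAlg} (A : V -> W).
Hypothesis hA : is_homomorphism A.

Lemma hom_opp (x : V) : A (vopp x) = vopp (A x).
Proof.
  destruct hA as [Hadd _]. apply vopp_unique.
  rewrite <- Hadd, vaddN. apply vadd_idem_eq0. rewrite <- Hadd, vadd0. reflexivity.
Qed.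

Lemma hom_Rq (q : quat) (a : V) : A (Rq q a) = Rq q (A a).
Proof.
  destruct hA as [Hadd [Hmul [Hlsc [_ Hone]]]].
  unfold Rq. rewrite !Hadd, Hmul, hom_opp, !Hlsc, Hone. reflexivity.
Qed.

Lemma hom_invertible (x : V) : invertible x -> invertible (A x).
Proof.
  destruct hA as [_ [Hmul [_ [_ Hone]]]]. intros [y [Hxy Hyx]].
  exists (A y). rewrite <- !Hmul, Hxy, Hyx. auto.
Qed.

Lemma S_spectrum_Phi_sub (a : V) (q : quat) : S_spectrum_Phi A a q -> S_spectrum a q.
Proof. intros HPhi Hinv. apply HPhi, hom_invertible, Hinv. Qed.

Lemma Rq_right_inverse_locally_bounded (a : V) (q : quat) :
  bounded_below A -> invertible (A (Rq q a)) -> exists d M, 0 < d /\ 0 <= M /\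
  forall p y, qnorm (qsub p q) < d -> vmul (Rq p a) y = vone -> vnorm y <= M.
Proof.
  intros [c [Hc HAc]] [w [_ HwT]]. rewrite hom_Rq in HwT.
  pose proof (vnorm_ge0 w) as Hw.
  destruct (Rq_continuous (A a) q (/ (2 * vnorm w + 1))) as [d [Hd Hcont]].
  { apply Rinv_0_lt_compat. lra. }
  exists d, (2 * vnorm w / c). split; [exact Hd|]. split.
  { apply Rmult_le_pos; [lra | apply Rlt_le, Rinv_0_lt_compat, Hc]. }
  intros p y Hp Hy.
  assert (HAy : vnorm (A y) <= 2 * vnorm w).
  { destruct hA as [_ [Hmul [_ [_ Hone]]]].
    apply (vnorm_right_inverse_le (Rq q (A a)) w (Rq p (A a))); [exact HwT | |].
    - rewrite <- hom_Rq, <- Hmul, Hy. exact Hone.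
    - specialize (Hcont p Hp).
      apply Rle_trans with (vnorm w * / (2 * vnorm w + 1)).
      + apply Rmult_le_compat_l; lra.
      + apply (Rmult_le_reg_r (2 * vnorm w + 1)); [lra|].
        rewrite Rmult_assoc, Rinv_l by lra. lra. }
  specialize (HAc y).
  apply (Rmult_le_reg_l c); [exact Hc|]. unfold Rdiv.
  replace (c * (2 * vnorm w * / c)) with (2 * vnorm w) by (field; lra). lra.
Qed.

Lemma boundary_S_spectrum_sub_S_spectrum_Phi (a : V) (q : quat) :
  bounded_below A -> boundaryH (S_spectrum a) q -> S_spectrum_Phi A a q.
Proof.
  intros HAb [Hcl Hnint] HPhi.
  destruct (Rq_right_inverse_locally_bounded a q HAb HPhi) as (d & M & Hd & HM & Hbound).
  exact (not_closureH_S_spectrum_of_bounded_inverses a q d M Hd HM Hbound Hnint Hcl).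
Qed.

End Homomorphism.

Theorem mainTheorem4 (V W : QBanachAlg) (A : V -> W) (a : V)
  (hV : (vone : V) <> vzero) (hW : (vone : W) <> vzero)
  (hA : is_homomorphism A) (hAb : bounded_below A) :
  forall q : quat, boundaryH (S_spectrum a) q -> boundaryH (S_spectrum_Phi A a) q.
Proof.
  intros q Hq. split.
  - apply closureH_of_mem, boundary_S_spectrum_sub_S_spectrum_Phi; assumption.
  - intro Hint. apply (proj2 Hq).
    exact (interiorH_mono _ _ q (S_spectrum_Phi_sub A hA a) Hint).
Qed.
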